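(* Let $\theta\in(0,\pi/2)$ and let $\mathcal B$ be a family of Besicovitch balls in $(\mathbb H,d_\alpha)$. Then there is a finite family of points $\{p_j\}$ such that $\mathcal F=\{B(p_j,r_{p_j})\}$ is a family of Besicovitch balls, every $p_j$ satisfies $z_{p_j}\le0$ and $p_j\in\mathcal C(\theta)$, and $\operatorname{Card}\mathcal B\le 2\big(\tfrac{\pi}{\theta}+1\big)\operatorname{Card}\mathcal F+2$.
   Context: $\mathbb H=\mathbb R^3$, $p=(x_p,y_p,z_p)$, group law $(x,y,z)\cdot(x',y',z')=(x+x',y+y',z+z'+\tfrac12(xy'-yx'))$, dilations $\delta_\lambda(x,y,z)=(\lambda x,\lambda y,\lambda^2z)$. Fix $\alpha>0$ such that $d_\alpha(p,q)=\inf\{r>0:\delta_{1/r}(p^{-1}\cdot q)\in B_\alpha\}$ is a distance, $B_\alpha$ the closed Euclidean ball of radius $\alpha$ at $0$. $B(p,r)=\{q:d_\alpha(q,p)\le r\}$ and $r_p=d_\alpha(0,p)$. $\mathcal C(\theta)=\{p: |y_p|<x_p\tan\theta\}$. A family of Besicovitch balls is a finite family of balls $\{B(x_B,r_B)\}$ with $x_B\notin B'$ for distinct members $B,B'$ and with nonempty common intersection. *)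

From Stdlib Require Import Reals List ClassicalEpsilon.
Import ListNotations.
Open Scope R_scope.

Definition H : Type := (R * R * R)%type.
Definition hx (p : H) : R := fst (fst p).
Definition hy (p : H) : R := snd (fst p).
Definition hz (p : H) : R := snd p.
Definition hpt (x y z : R) : H := (x, y, z).

Definition hmul (p q : H) : H :=
  hpt (hx p + hx q) (hy p + hy q)
      (hz p + hz q + / 2 * (hx p * hy q - hy p * hx q)).
Definition hinv (p : H) : H := hpt (- hx p) (- hy p) (- hz p).
Definition horigin : H := hpt 0 0 0.

Definition dil (l : R) (p : H) : H := hpt (l * hx p) (l * hy p) (l * l * hz p).

Definition in_Balpha (alpha : R) (p : H) : Prop :=
  hx p ^ 2 + hy p ^ 2 + hz p ^ 2 <= alpha ^ 2.

Definition is_inf (S : R -> Prop) (m : R) : Prop :=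
  (forall r, S r -> m <= r) /\ (forall m', (forall r, S r -> m' <= r) -> m' <= m).

Definition dset (alpha : R) (p q : H) (r : R) : Prop :=
  r > 0 /\ in_Balpha alpha (dil (/ r) (hmul (hinv p) q)).

Definition d_alpha (alpha : R) (p q : H) : R :=
  epsilon (inhabits 0) (fun m => is_inf (dset alpha p q) m).

Definition is_distance (d : H -> H -> R) : Prop :=
  (forall p q, 0 <= d p q) /\
  (forall p q, d p q = 0 <-> p = q) /\
  (forall p q, d p q = d q p) /\
  (forall p q s, d p s <= d p q + d q s).

Definition in_ball (alpha : R) (p : H) (r : R) (q : H) : Prop :=
  d_alpha alpha q p <= r.

Definition rp (alpha : R) (p : H) : R := d_alpha alpha horigin p.

Definition in_cone (theta : R) (p : H) : Prop :=
  Rabs (hy p) < hx p * tan theta.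

(* A finite family of balls is given as a list of (center, radius) pairs,
   its cardinality being the length of the list.  It is a family of
   Besicovitch balls if the center of each member does not lie in any other
   member (which forces the members to be pairwise distinct balls), and
   the members have a common point. *)
Definition besicovitch (alpha : R) (fam : list (H * R)) : Prop :=
  (forall i j, (i < length fam)%nat -> (j < length fam)%nat -> i <> j ->
     ~ in_ball alpha (fst (nth j fam (horigin, 0)))
                     (snd (nth j fam (horigin, 0)))
                     (fst (nth i fam (horigin, 0)))) /\
  (exists q, forall b, In b fam -> in_ball alpha (fst b) (snd b) q).

From Stdlib Require Import Reals List Bool ZArith Lra Lia Psatz.
From Stdlib Require Import ClassicalEpsilon FunctionalExtensionality PropExtensionality.
Import ListNotations.
Open Scope R_scope.

(* Translate the common point of the balls to the origin.  Left translations,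
   rotations about the vertical axis and the reflection (x,y,z) -> (x,-y,-z)
   preserve d_alpha, so the centres c then satisfy r_c < d(c', c) for every other
   centre c', and any isometry fixing the origin preserves this.  At most two
   centres lie on the vertical axis, since of two such centres on the same side of
   the origin the lower one lies in the ball around the higher one.  Every other
   centre is mapped by one of 2m such isometries, m = floor(pi/theta) + 1, into the
   lower half of the cone C(theta); by pigeonhole one of them handles at least a
   1/(2m) fraction of the centres. *)

Lemma hpt_eta (p : H) : hpt (hx p) (hy p) (hz p) = p.
Proof. destruct p as [[a b] c]; reflexivity. Qed.

Lemma hx_hpt x y z : hx (hpt x y z) = x. Proof. reflexivity. Qed.
Lemma hy_hpt x y z : hy (hpt x y z) = y. Proof. reflexivity. Qed.
Lemma hz_hpt x y z : hz (hpt x y z) = z. Proof. reflexivity. Qed.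

Lemma hpt_eq (p q : H) : hx p = hx q -> hy p = hy q -> hz p = hz q -> p = q.
Proof. intros Ex Ey Ez. rewrite <- (hpt_eta p), <- (hpt_eta q), Ex, Ey, Ez. reflexivity. Qed.

Definition isometry (alpha : R) (F : H -> H) : Prop :=
  forall p q, d_alpha alpha (F p) (F q) = d_alpha alpha p q.

Lemma isometry_intro alpha (F G : H -> H) :
  (forall p q, hmul (hinv (F p)) (F q) = G (hmul (hinv p) q)) ->
  (forall l v, dil l (G v) = G (dil l v)) ->
  (forall v, in_Balpha alpha (G v) <-> in_Balpha alpha v) ->
  isometry alpha F.
Proof.
  intros HF Hdil HB p q. unfold d_alpha.
  replace (dset alpha (F p) (F q)) with (dset alpha p q); [reflexivity|].
  extensionality r. apply propositional_extensionality. unfold dset.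
  rewrite HF, Hdil, HB. reflexivity.
Qed.

Lemma isometry_hmul alpha g : isometry alpha (hmul g).
Proof.
  apply (isometry_intro alpha _ (fun v => v)); try tauto.
  intros p q. apply hpt_eq; unfold hmul, hinv, hpt, hx, hy, hz; simpl; field.
Qed.

Definition rotation (t : R) (p : H) : H :=
  hpt (cos t * hx p - sin t * hy p) (sin t * hx p + cos t * hy p) (hz p).

Definition flip (p : H) : H := hpt (hx p) (- hy p) (- hz p).

Lemma isometry_rotation alpha t : isometry alpha (rotation t).
Proof.
  assert (Hcs : cos t * cos t + sin t * sin t = 1).
  { pose proof (sin2_cos2 t). unfold Rsqr in *. lra. }
  apply (isometry_intro alpha _ (rotation t)).
  - intros p q. apply hpt_eq; unfold rotation, hmul, hinv, hpt, hx, hy, hz; simpl; try ring.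
    transitivity (- snd p + snd q + / 2 * (cos t * cos t + sin t * sin t) *
      (- fst (fst p) * snd (fst q) + snd (fst p) * fst (fst q))); [ring|].
    rewrite Hcs. ring.
  - intros l v. apply hpt_eq; unfold rotation, dil, hpt, hx, hy, hz; simpl; ring.
  - intros v. unfold in_Balpha, rotation, hpt, hx, hy, hz; cbn [fst snd].
    replace ((cos t * fst (fst v) - sin t * snd (fst v)) ^ 2 +
             (sin t * fst (fst v) + cos t * snd (fst v)) ^ 2)
      with ((cos t * cos t + sin t * sin t) * (fst (fst v) ^ 2 + snd (fst v) ^ 2)) by ring.
    rewrite Hcs, Rmult_1_l. reflexivity.
Qed.

Lemma isometry_flip alpha : isometry alpha flip.
Proof.
  apply (isometry_intro alpha _ flip).
  - intros p q. apply hpt_eq; unfold flip, hmul, hinv, hpt, hx, hy, hz; simpl; field.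
  - intros l v. apply hpt_eq; unfold flip, dil, hpt, hx, hy, hz; simpl; ring.
  - intros v. unfold in_Balpha, flip, hpt, hx, hy, hz; cbn [fst snd].
    replace ((- snd (fst v)) ^ 2) with (snd (fst v) ^ 2) by ring.
    replace ((- snd v) ^ 2) with (snd v ^ 2) by ring. reflexivity.
Qed.

Lemma isometry_comp alpha F G :
  isometry alpha F -> isometry alpha G -> isometry alpha (fun p => F (G p)).
Proof. intros HF HG p q. rewrite HF. apply HG. Qed.

Lemma isometry_rp alpha F : isometry alpha F -> F horigin = horigin ->
  forall p, rp alpha (F p) = rp alpha p.
Proof. intros HF H0 p. unfold rp. rewrite <- H0 at 1. apply HF. Qed.

Lemma rp_hmul_hinv alpha q p : rp alpha (hmul (hinv q) p) = d_alpha alpha q p.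
Proof.
  unfold rp. replace horigin with (hmul (hinv q) q).
  - apply isometry_hmul.
  - apply hpt_eq; unfold hmul, hinv, horigin, hpt, hx, hy, hz; simpl; ring.
Qed.

Section OrdPairs.

Context {A B : Type}.

Lemma ForallOrdPairs_map (R : A -> A -> Prop) (R' : B -> B -> Prop) (f : A -> B) l :
  (forall a b, In a l -> In b l -> R a b -> R' (f a) (f b)) ->
  ForallOrdPairs R l -> ForallOrdPairs R' (map f l).
Proof.
  intros Hf Hl. induction Hl as [|a l Ha Hl IH]; constructor.
  - apply Forall_map. rewrite Forall_forall in *. intros b Hb.
    apply Hf; simpl; auto.
  - apply IH. intros a' b' Ha' Hb'. apply Hf; simpl; auto.
Qed.

Lemma ForallOrdPairs_filter (R : A -> A -> Prop) (f : A -> bool) l :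
  ForallOrdPairs R l -> ForallOrdPairs R (filter f l).
Proof.
  intros Hl. induction Hl as [|a l Ha Hl IH]; simpl; [constructor|].
  destruct (f a); [|exact IH]. constructor; [|exact IH].
  rewrite Forall_forall in *. intros b Hb. apply Ha. apply filter_In in Hb. apply Hb.
Qed.

Lemma ForallOrdPairs_nth (R : A -> A -> Prop) d l :
  ForallOrdPairs (fun a b => R a b /\ R b a) l <->
  (forall i j, (i < length l)%nat -> (j < length l)%nat -> i <> j -> R (nth i l d) (nth j l d)).
Proof.
  induction l as [|a l IH]; simpl; split.
  - intros _ i j Hi. lia.
  - intros _. constructor.
  - intros Hl. inversion Hl as [|? ? Ha Hl']; subst. rewrite Forall_forall in Ha.
    intros [|i] [|j] Hi Hj Hij; try lia.
    + apply Ha, nth_In. lia.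
    + apply Ha, nth_In. lia.
    + apply IH; [exact Hl'|lia|lia|lia].
  - intros Hnth. constructor.
    + rewrite Forall_forall. intros b Hb. destruct (In_nth l b d Hb) as [j [Hj <-]].
      split; [apply (Hnth 0%nat (S j))|apply (Hnth (S j) 0%nat)]; lia.
    + apply IH. intros i j Hi Hj Hij. apply (Hnth (S i) (S j)); lia.
Qed.

End OrdPairs.

(* [separated alpha cs]: the balls B(c, r_c), c in cs, which all contain the
   origin, form a family of Besicovitch balls. *)
Definition separated (alpha : R) (cs : list H) : Prop :=
  ForallOrdPairs (fun u v => rp alpha v < d_alpha alpha u v /\ rp alpha u < d_alpha alpha v u) cs.

Lemma besicovitch_of_separated alpha cs :
  separated alpha cs -> besicovitch alpha (map (fun p => (p, rp alpha p)) cs).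
Proof.
  intros Hsep. split.
  - intros i j Hi Hj Hij. rewrite length_map in Hi, Hj.
    set (f := fun p => (p, rp alpha p)).
    assert (Hnth : forall n, (n < length cs)%nat ->
      nth n (map f cs) (horigin, 0) = f (nth n cs horigin)).
    { intros n Hn. transitivity (nth n (map f cs) (f horigin)); [|apply map_nth].
      apply nth_indep. rewrite length_map. exact Hn. }
    rewrite !Hnth by assumption. unfold f, in_ball. simpl.
    apply Rlt_not_le,
      (proj1 (ForallOrdPairs_nth (fun u v => rp alpha v < d_alpha alpha u v) horigin cs));
      assumption.
  - exists horigin. intros b Hb. apply in_map_iff in Hb as [p [<- _]].
    unfold in_ball, rp. simpl. apply Rle_refl.
Qed.

Lemma separated_of_besicovitch alpha Bfam q :
  besicovitch alpha Bfam -> (forall b, In b Bfam -> in_ball alpha (fst b) (snd b) q) ->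
  separated alpha (map (fun b => hmul (hinv q) (fst b)) Bfam).
Proof.
  intros [Hout _] Hq.
  apply (ForallOrdPairs_nth (fun a b => ~ in_ball alpha (fst b) (snd b) (fst a)) (horigin, 0))
    in Hout.
  refine (ForallOrdPairs_map _ _ _ _ _ Hout). intros a b Ha Hb [Hab Hba].
  unfold in_ball in *. rewrite !rp_hmul_hinv, !isometry_hmul.
  pose proof (Hq a Ha). pose proof (Hq b Hb). lra.
Qed.

Lemma separated_map alpha F cs : isometry alpha F -> F horigin = horigin ->
  separated alpha cs -> separated alpha (map F cs).
Proof.
  intros HF H0. apply ForallOrdPairs_map. intros u v _ _.
  rewrite !HF, !(isometry_rp alpha F HF H0). tauto.
Qed.

Lemma separated_filter alpha f cs : separated alpha cs -> separated alpha (filter f cs).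
Proof. apply ForallOrdPairs_filter. Qed.

Section PositiveAlpha.

Variable alpha : R.
Hypothesis Halpha : 0 < alpha.

Lemma dset_inhabited p q : exists r, dset alpha p q r.
Proof.
  set (v := hmul (hinv p) q).
  set (K := hx v * hx v + hy v * hy v + hz v * hz v).
  set (t := alpha * alpha / (alpha * alpha + K)).
  assert (HK : 0 <= K) by (unfold K; nra).
  assert (Ht : 0 < t) by (unfold t; apply Rdiv_lt_0_compat; nra).
  assert (Et : t * (alpha * alpha + K) = alpha * alpha) by (unfold t; field; nra).
  assert (0 <= t * K) by (apply Rmult_le_pos; lra).
  assert (Ha2 : 0 < alpha * alpha) by nra.
  assert (Ht1 : t <= 1) by (apply (Rmult_le_reg_r (alpha * alpha)); lra).
  exists (/ t). split; [apply Rinv_0_lt_compat; exact Ht|].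
  rewrite Rinv_inv. unfold in_Balpha, dil. rewrite hx_hpt, hy_hpt, hz_hpt. fold v.
  assert (Htt : 0 <= t * t <= 1) by nra.
  assert (t * t * (hz v * hz v) <= hz v * hz v)
    by (rewrite <- (Rmult_1_l (hz v * hz v)) at 2; apply Rmult_le_compat_r; nra).
  assert (t * t * K <= t * K) by (apply Rmult_le_compat_r; nra).
  unfold K in *. nra.
Qed.

Lemma d_alpha_is_inf p q : is_inf (dset alpha p q) (d_alpha alpha p q).
Proof.
  unfold d_alpha. apply epsilon_spec.
  destruct (dset_inhabited p q) as [r0 Hr0].
  destruct (completeness (fun x => dset alpha p q (- x))) as [m [Hub Hlub]].
  - exists 0. intros x [Hx _]. lra.
  - exists (- r0). rewrite Ropp_involutive. exact Hr0.
  - exists (- m). split.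
    + intros r Hr. enough (- r <= m) by lra. apply Hub. rewrite Ropp_involutive. exact Hr.
    + intros m' Hm'. enough (m <= - m') by lra.
      apply Hlub. intros x Hx. specialize (Hm' _ Hx). lra.
Qed.

Lemma d_alpha_le_dset_incl p q p' q' :
  (forall r, dset alpha p' q' r -> dset alpha p q r) -> d_alpha alpha p q <= d_alpha alpha p' q'.
Proof.
  intros Hincl. apply (proj2 (d_alpha_is_inf p' q')).
  intros r Hr. apply (proj1 (d_alpha_is_inf p q)), Hincl, Hr.
Qed.

Lemma d_alpha_vertical_le_rp u v :
  hx u = 0 -> hy u = 0 -> hx v = 0 -> hy v = 0 ->
  (hz v - hz u) ^ 2 <= hz v ^ 2 -> d_alpha alpha u v <= rp alpha v.
Proof.
  intros Hxu Hyu Hxv Hyv Hz. apply d_alpha_le_dset_incl. intros r [Hr HB]. split; [exact Hr|].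
  revert HB. unfold in_Balpha, dil, hmul, hinv, horigin, hx, hy, hz, hpt in *; cbn [fst snd] in *.
  rewrite Hxu, Hyu, Hxv, Hyv. intros HB.
  assert (0 <= (/ r * / r) ^ 2) by (apply pow2_ge_0).
  assert ((/ r * / r) ^ 2 * (snd v - snd u) ^ 2 <= (/ r * / r) ^ 2 * snd v ^ 2)
    by (apply Rmult_le_compat_l; assumption).
  nra.
Qed.

(* Of two points on the vertical axis at the same side of the origin, the lower
   one lies in the ball centred at the higher one. *)
Lemma vertical_separated_opposite u v :
  hx u = 0 -> hy u = 0 -> hx v = 0 -> hy v = 0 ->
  rp alpha v < d_alpha alpha u v -> rp alpha u < d_alpha alpha v u -> hz u * hz v < 0.
Proof.
  intros Hxu Hyu Hxv Hyv Huv Hvu. apply Rnot_le_lt. intros Hsame.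
  destruct (Rle_or_lt (hz u ^ 2) (hz v ^ 2)).
  - assert (d_alpha alpha u v <= rp alpha v) by (apply d_alpha_vertical_le_rp; auto; nra). lra.
  - assert (d_alpha alpha v u <= rp alpha u) by (apply d_alpha_vertical_le_rp; auto; nra). lra.
Qed.

Lemma separated_vertical_length cs : separated alpha cs ->
  (forall c, In c cs -> hx c = 0 /\ hy c = 0) -> (length cs <= 2)%nat.
Proof.
  intros Hsep Hvert.
  assert (Hopp : ForallOrdPairs (fun u v => hz u * hz v < 0) cs).
  { rewrite <- (map_id cs). refine (ForallOrdPairs_map _ _ _ _ _ Hsep).
    intros u v Hu Hv [Huv Hvu].
    destruct (Hvert u Hu), (Hvert v Hv). apply vertical_separated_opposite; assumption. }
  destruct cs as [|a [|b [|c cs]]]; simpl; try lia. exfalso.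
  inversion Hopp as [|? ? Ha Hbc]; subst. inversion Hbc as [|? ? Hb _]; subst.
  apply Forall_inv in Hb. pose proof (Forall_inv Ha). apply Forall_inv_tail, Forall_inv in Ha.
  assert (0 <= (hz a * hz b * hz c) ^ 2) by apply pow2_ge_0.
  nra.
Qed.

End PositiveAlpha.

Lemma polar_coordinates x y : 0 < x ^ 2 + y ^ 2 ->
  exists rho phi, 0 < rho /\ - PI <= phi <= PI /\ x = rho * cos phi /\ y = rho * sin phi.
Proof.
  intros Hpos.
  set (rho := sqrt (x ^ 2 + y ^ 2)).
  assert (Hrho : 0 < rho) by (apply sqrt_lt_R0; exact Hpos).
  assert (Hrho2 : rho * rho = x ^ 2 + y ^ 2) by (apply sqrt_sqrt; lra).
  set (u := x / rho).
  assert (Hx : x = rho * u) by (unfold u; field; lra).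
  assert (Hu2 : u * u <= 1).
  { apply (Rmult_le_reg_l (rho * rho)); [nra|]. rewrite Hx in Hrho2. nra. }
  assert (Hu : -1 <= u <= 1) by nra.
  assert (Hsin : sin (acos u) = Rabs y / rho).
  { rewrite sin_acos by exact Hu.
    replace (1 - u²) with ((y / rho)²) by (unfold u, Rsqr; field_simplify_eq; nra).
    rewrite sqrt_Rsqr_abs. unfold Rdiv. rewrite Rabs_mult, Rabs_inv, (Rabs_pos_eq rho); lra. }
  pose proof (acos_bound u) as Hacos.
  exists rho. destruct (Rle_or_lt 0 y) as [Hy|Hy].
  - exists (acos u). rewrite cos_acos, Hsin, Rabs_pos_eq by assumption.
    repeat split; try lra. field. lra.
  - exists (- acos u). rewrite cos_neg, sin_neg, cos_acos, Hsin, Rabs_left by assumption.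
    repeat split; try lra. field. lra.
Qed.

Lemma rotation_polar t rho phi p : hx p = rho * cos phi -> hy p = rho * sin phi ->
  hx (rotation t p) = rho * cos (phi + t) /\ hy (rotation t p) = rho * sin (phi + t).
Proof.
  intros Ex Ey. unfold rotation. rewrite hx_hpt, hy_hpt, Ex, Ey, cos_plus, sin_plus. split; ring.
Qed.

Lemma in_cone_polar theta rho psi p : 0 < theta < PI / 2 -> 0 < rho -> Rabs psi < theta ->
  hx p = rho * cos psi -> hy p = rho * sin psi -> in_cone theta p.
Proof.
  intros Htheta Hrho Hpsi Ex Ey. apply Rabs_def2 in Hpsi.
  assert (Hcos : 0 < cos psi) by (apply cos_gt_0; lra).
  assert (Htan : Rabs (tan psi) < tan theta).
  { apply Rabs_def1; [|rewrite <- tan_neg]; apply tan_increasing; lra. }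
  unfold in_cone. rewrite Ex, Ey.
  replace (sin psi) with (tan psi * cos psi) by (unfold tan; field; lra).
  rewrite !Rabs_mult, (Rabs_pos_eq rho), (Rabs_pos_eq (cos psi)) by lra.
  assert (0 < rho * cos psi) by (apply Rmult_lt_0_compat; lra).
  nra.
Qed.

Lemma nat_interval_cover w m s : 0 < w -> (0 < m)%nat -> 0 <= s <= INR m * w ->
  exists j, (j < m)%nat /\ INR j * w <= s <= INR (S j) * w.
Proof.
  intros Hw. induction m as [|m IH]; intros Hm Hs; [lia|].
  destruct (Rle_or_lt (INR m * w) s) as [Hle|Hlt].
  - exists m. split; [lia|lra].
  - destruct m as [|m]; [simpl in Hlt; lra|].
    destruct IH as [j [Hj Hjs]]; [lia|lra|]. exists j. split; [lia|exact Hjs].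
Qed.

Lemma exists_nat_between r : 0 < r -> exists m, (0 < m)%nat /\ r < INR m <= r + 1.
Proof.
  intros Hr. destruct (archimed r) as [Hup1 Hup2].
  assert (Hpos : (0 < up r)%Z) by (apply lt_0_IZR; lra).
  exists (Z.to_nat (up r)).
  rewrite INR_IZR_INZ, Z2Nat.id by lia. split; [lia|lra].
Qed.

(* Rotating by [sector_angle m j] centres the sector of polar angles
   [-pi + j w, -pi + (j+1) w], w = 2 pi / m, on the positive x-axis. *)
Definition sector_angle (m j : nat) : R := PI - (INR j + / 2) * (2 * PI / INR m).

Lemma rotation_into_cone theta m c : 0 < theta < PI / 2 -> (0 < m)%nat -> PI < INR m * theta ->
  0 < hx c ^ 2 + hy c ^ 2 -> exists j, (j < m)%nat /\ in_cone theta (rotation (sector_angle m j) c).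
Proof.
  intros Htheta Hm Hmtheta Hc.
  destruct (polar_coordinates (hx c) (hy c) Hc) as [rho [phi [Hrho [Hphi [Ex Ey]]]]].
  assert (Hm' : 0 < INR m) by (apply lt_0_INR; exact Hm).
  set (w := 2 * PI / INR m).
  assert (Hw : 0 < w) by (unfold w; apply Rdiv_lt_0_compat; [pose proof PI_RGT_0|]; lra).
  assert (Hw2 : w / 2 < theta).
  { unfold w. apply (Rmult_lt_reg_r (INR m)); [exact Hm'|].
    replace (2 * PI / INR m / 2 * INR m) with PI by (field; lra). lra. }
  destruct (nat_interval_cover w m (phi + PI)) as [j [Hj Hcover]]; [exact Hw|exact Hm| |].
  { replace (INR m * w) with (2 * PI) by (unfold w; field; lra). lra. }
  exists j. split; [exact Hj|].
  destruct (rotation_polar (sector_angle m j) rho phi c Ex Ey) as [Ex' Ey'].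
  apply (in_cone_polar theta rho (phi + sector_angle m j)); try assumption.
  apply Rabs_def1; unfold sector_angle; fold w; rewrite S_INR in Hcover; lra.
Qed.

(* The 2m normalising maps: a rotation into the cone, preceded by the reflection
   [flip] for the last m of them so as to make the height nonpositive. *)
Definition sector_map (m k : nat) (c : H) : H :=
  if (k <? m)%nat then rotation (sector_angle m k) c
  else rotation (sector_angle m (k - m)) (flip c).

Lemma sector_map_origin m k : sector_map m k horigin = horigin.
Proof.
  unfold sector_map. destruct (k <? m)%nat;
    apply hpt_eq; unfold rotation, flip, horigin; rewrite ?hx_hpt, ?hy_hpt, ?hz_hpt; ring.
Qed.

Lemma isometry_sector_map alpha m k : isometry alpha (sector_map m k).
Proof.
  unfold sector_map. destruct (k <? m)%nat.
  - apply isometry_rotation.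
  - apply isometry_comp; [apply isometry_rotation|apply isometry_flip].
Qed.

Lemma sector_map_into_lower_cone theta m c :
  0 < theta < PI / 2 -> (0 < m)%nat -> PI < INR m * theta -> 0 < hx c ^ 2 + hy c ^ 2 ->
  exists k, (k < 2 * m)%nat /\ hz (sector_map m k c) <= 0 /\ in_cone theta (sector_map m k c).
Proof.
  intros Htheta Hm Hmtheta Hc. unfold sector_map.
  destruct (Rle_or_lt (hz c) 0) as [Hz|Hz].
  - destruct (rotation_into_cone theta m c) as [j [Hj Hcone]]; try assumption.
    exists j. replace (j <? m)%nat with true by (symmetry; apply Nat.ltb_lt; exact Hj).
    unfold rotation at 1. rewrite hz_hpt. repeat split; [lia|exact Hz|exact Hcone].
  - destruct (rotation_into_cone theta m (flip c)) as [j [Hj Hcone]]; try assumption.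
    { unfold flip. rewrite hx_hpt, hy_hpt.
      replace ((- hy c) ^ 2) with (hy c ^ 2) by ring. exact Hc. }
    exists (j + m)%nat. replace (j + m <? m)%nat with false by (symmetry; apply Nat.ltb_ge; lia).
    replace (j + m - m)%nat with j by lia.
    unfold rotation at 1. rewrite hz_hpt. unfold flip at 1. rewrite hz_hpt.
    repeat split; [lia|lra|exact Hcone].
Qed.

Lemma filter_filter_eq {A} (f g : A -> bool) l :
  (forall a, f a = true -> g a = true) -> filter f (filter g l) = filter f l.
Proof.
  intros Hfg. induction l as [|a l IH]; simpl; [reflexivity|].
  destruct (f a) eqn:Hf.
  - rewrite (Hfg a Hf). simpl. rewrite Hf, IH. reflexivity.
  - destruct (g a); simpl; rewrite ?Hf; exact IH.
Qed.

Lemma pigeonhole {A} (cls : A -> nat) M l : (0 < M)%nat -> (forall a, In a l -> (cls a < M)%nat) ->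
  exists k, (k < M)%nat /\ (length l <= M * length (filter (fun a => cls a =? k) l))%nat.
Proof.
  revert l. induction M as [|M IH]; intros l HM Hcls; [lia|].
  remember (filter (fun a => cls a =? M) l) as top eqn:Etop.
  remember (filter (fun a => negb (cls a =? M)) l) as rest eqn:Erest.
  assert (Hsplit : (length top + length rest)%nat = length l)
    by (subst; apply filter_length).
  destruct (Nat.le_gt_cases (length l) (S M * length top)) as [Htop|Htop].
  { exists M. split; [lia|]. subst top. exact Htop. }
  assert (Hrest : forall a, In a rest -> (cls a < M)%nat).
  { intros a Ha. subst rest. apply filter_In in Ha as [Ha Hneq].
    apply negb_true_iff, Nat.eqb_neq in Hneq. specialize (Hcls a Ha). lia. }
  destruct (Nat.eq_dec M 0) as [->|HM0].
  { destruct rest as [|a r]; [simpl in Hsplit; lia|].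
    exfalso. specialize (Hrest a (or_introl eq_refl)). lia. }
  destruct (IH rest) as [k [Hk Hcount]]; [lia|exact Hrest|].
  exists k. split; [lia|].
  assert (Hclass : filter (fun a => cls a =? k) rest = filter (fun a => cls a =? k) l).
  { subst rest. apply filter_filter_eq. intros a Ha.
    apply Nat.eqb_eq in Ha. apply negb_true_iff, Nat.eqb_neq. lia. }
  rewrite Hclass in Hcount. set (c := length (filter (fun a => cls a =? k) l)) in *.
  assert (M * length top < length rest)%nat by nia.
  assert (S M * length rest <= S M * (M * c))%nat by (apply Nat.mul_le_mono_l; exact Hcount).
  nia.
Qed.

Definition off_axis (c : H) : bool := if Rlt_dec 0 (hx c ^ 2 + hy c ^ 2) then true else false.

Lemma off_axis_true c : off_axis c = true -> 0 < hx c ^ 2 + hy c ^ 2.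
Proof. unfold off_axis. destruct (Rlt_dec _ _); easy. Qed.

Lemma off_axis_false c : negb (off_axis c) = true -> hx c = 0 /\ hy c = 0.
Proof. unfold off_axis. destruct (Rlt_dec _ _) as [|Hc]; [easy|]. intros _. split; nra. Qed.

Lemma separated_lower_cone_subfamily alpha theta cs : 0 < theta < PI / 2 ->
  separated alpha cs -> (forall c, In c cs -> 0 < hx c ^ 2 + hy c ^ 2) ->
  exists ps, separated alpha ps /\ (forall p, In p ps -> hz p <= 0 /\ in_cone theta p) /\
    INR (length cs) <= 2 * (PI / theta + 1) * INR (length ps).
Proof.
  intros Htheta Hsep Hoff. pose proof PI_RGT_0.
  destruct (exists_nat_between (PI / theta)) as [m [Hm [Hlow Hup]]];
    [apply Rdiv_lt_0_compat; lra|].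
  assert (Hmtheta : PI < INR m * theta).
  { apply (Rmult_lt_compat_r theta) in Hlow; [|lra].
    replace (PI / theta * theta) with PI in Hlow by (field; lra). exact Hlow. }
  set (good := fun k c =>
    (k < 2 * m)%nat /\ hz (sector_map m k c) <= 0 /\ in_cone theta (sector_map m k c)).
  set (cls := fun c => epsilon (inhabits 0%nat) (fun k => good k c)).
  assert (Hcls : forall c, In c cs -> good (cls c) c).
  { intros c Hc. apply epsilon_spec, sector_map_into_lower_cone; auto. }
  destruct (pigeonhole cls (2 * m) cs) as [k [Hk Hcount]]; [lia|apply Hcls|].
  set (F := filter (fun c => cls c =? k) cs) in *.
  exists (map (sector_map m k) F). split; [|split].
  - apply separated_map, separated_filter, Hsep;
      [apply isometry_sector_map|apply sector_map_origin].
  - intros p Hp. apply in_map_iff in Hp as [c [<- Hc]].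
    apply filter_In in Hc as [Hc Hck]. apply Nat.eqb_eq in Hck.
    destruct (Hcls c Hc) as [_ Hgood]. rewrite Hck in Hgood. exact Hgood.
  - rewrite length_map. apply le_INR in Hcount. rewrite !mult_INR in Hcount.
    change (INR 2) with 2 in Hcount.
    assert (INR m * INR (length F) <= (PI / theta + 1) * INR (length F))
      by (apply Rmult_le_compat_r; [apply pos_INR|exact Hup]).
    lra.
Qed.

Theorem lemma3p1 (alpha : R) (Halpha : 0 < alpha)
  (Hdist : is_distance (d_alpha alpha))
  (theta : R) (Htheta : 0 < theta < PI / 2)
  (Bfam : list (H * R)) (HB : besicovitch alpha Bfam) :
  exists ps : list H,
    besicovitch alpha (map (fun p => (p, rp alpha p)) ps) /\
    (forall p, In p ps -> hz p <= 0 /\ in_cone theta p) /\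
    INR (length Bfam) <= 2 * (PI / theta + 1) * INR (length ps) + 2.
Proof.
  destruct (proj2 HB) as [q Hq].
  set (cs := map (fun b => hmul (hinv q) (fst b)) Bfam).
  assert (Hsep : separated alpha cs) by (apply separated_of_besicovitch; assumption).
  destruct (separated_lower_cone_subfamily alpha theta (filter off_axis cs))
    as [ps [Hps [Hcone Hcount]]]; [exact Htheta|apply separated_filter, Hsep|..].
  { intros c Hc. apply filter_In in Hc. apply off_axis_true, Hc. }
  exists ps. split; [apply besicovitch_of_separated, Hps|split; [exact Hcone|]].
  assert (Hvertical : (length (filter (fun c => negb (off_axis c)) cs) <= 2)%nat).
  { apply (separated_vertical_length alpha Halpha); [apply separated_filter, Hsep|].
    intros c Hc. apply filter_In in Hc. apply off_axis_false, Hc. }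
  assert (Hlen : length Bfam =
    (length (filter off_axis cs) + length (filter (fun c => negb (off_axis c)) cs))%nat)
    by (rewrite filter_length; unfold cs; rewrite length_map; reflexivity).
  apply le_INR in Hvertical. rewrite Hlen, plus_INR. change (INR 2) with 2 in Hvertical. lra.
Qed.
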